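(* Let $(G,\gamma)$ and $(T,\eta)$ be unary FA-presentable directed graphs and let $g\in G$, $t\in T$. Then the directed graph obtained by attaching $(T,\eta)$ at $t$ to $g$ is unary FA-presentable.
   Context: A directed graph is a set with a binary edge relation. Attaching $(T,\eta)$ at $t$ to the vertex $g$ of $(G,\gamma)$ means taking the disjoint union of the two graphs and identifying $g$ and $t$. A structure $(X,\eta)$ is unary FA-presentable if there exist a regular language $L\subseteq a^*$ and a surjection $\phi:L\to X$ such that $\{(u,v)\in L^2:u\phi=v\phi\}$ and $\{(u,v)\in L^2:(u\phi,v\phi)\in\eta\}$ are regular relations (the words $\mathrm{conv}(u,v)$ over $\{a,\$\}^2$, reading $u,v$ in parallel with the shorter padded by $\$$, form regular languages). *)

From mathcomp Require Import all_boot.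
Set Implicit Arguments. Unset Strict Implicit. Unset Printing Implicit Defensive.

Definition dfa_run (A S : Type) (d : S -> A -> S) (s : S) (w : seq A) : S :=
  foldl d s w.

Definition regular (A : finType) (L : seq A -> Prop) : Prop :=
  exists (S : finType) (s0 : S) (d : S -> A -> S) (F : pred S),
    forall w, L w <-> F (dfa_run d s0 w).

(* Convolution conv(u,v): read u,v in parallel, padding the shorter with $
   (here [None]); letters of the alphabet {a,$}^2 are pairs of options. *)
Definition conv (A : Type) (u v : seq A) : seq (option A * option A) :=
  [seq (onth u i, onth v i) | i <- iota 0 (maxn (size u) (size v))].

Definition regular_rel (A : finType) (R : seq A -> seq A -> Prop) : Prop :=
  regular (fun w : seq (option A * option A) =>
             exists u v, R u v /\ w = conv u v).

(* Unary alphabet {a}: the single letter a is [tt : unit], so a^* = seq unit. *)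
Definition uword := seq unit.

Definition unary_FA_presentable (X : Type) (eta : X -> X -> Prop) : Prop :=
  exists (L : uword -> Prop) (phi : {u : uword | L u} -> X),
    regular L /\
    (forall x : X, exists u, phi u = x) /\
    regular_rel (fun u v : uword =>
       exists (hu : L u) (hv : L v), phi (exist _ u hu) = phi (exist _ v hv)) /\
    regular_rel (fun u v : uword =>
       exists (hu : L u) (hv : L v), eta (phi (exist _ u hu)) (phi (exist _ v hv))).

(* Disjoint union of G and T with t identified with g: concretely the vertex
   set G + (T \ {t}); the vertex t of T becomes the vertex [inl g]. *)
Definition attach_vertex (G T : Type) (t : T) : Type := (G + {x : T | x <> t})%type.

Definition attach_rel (G T : Type) (gamma : G -> G -> Prop) (eta : T -> T -> Prop)
    (g : G) (t : T) (a b : attach_vertex G t) : Prop :=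
  match a, b with
  | inl x, inl y => gamma x y \/ (x = g /\ y = g /\ eta t t)
  | inl x, inr y => x = g /\ eta t (proj1_sig y)
  | inr x, inl y => y = g /\ eta (proj1_sig x) t
  | inr x, inr y => eta (proj1_sig x) (proj1_sig y)
  end.

(* Over a one-letter alphabet a word is determined by its length, so a unary
   presentation amounts to a numbering of the vertices by a regular set of
   naturals, and a regular relation to a set of pairs (p, q) accepted by an
   automaton that reads min(p, q) letters of one kind and then |p - q| letters
   of one of two other kinds.  Such relations are closed under boolean
   operations, swapping, cylinders, diagonals, sections at a fixed number and
   interleaving along parity.  Number G by the even and T by the odd numbers,
   sending t to g: each of the four parity blocks of the equality and edge
   relations of the attached graph is then a boolean combination of those of G
   and T and of their sections at g and t. *)

From mathcomp Require Import all_boot zify.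
From Stdlib Require Import Classical ClassicalEpsilon ProofIrrelevance.
Set Implicit Arguments. Unset Strict Implicit. Unset Printing Implicit Defensive.

Lemma uword_nseq (w : uword) : w = nseq (size w) tt.
Proof. by elim: w => [|[] w IH] //=; rewrite -IH. Qed.

Lemma foldl_nseq (S A : Type) (d : S -> A -> S) (a : A) n s :
  foldl d s (nseq n a) = iter n (d^~ a) s.
Proof. by elim: n s => [|n IH] s //; rewrite [LHS]/= IH iterSr. Qed.

Lemma onth_iota m k i : onth (iota m k) i = if i < k then Some (m + i) else None.
Proof.
elim: k m i => [|k IH] m [|i] //=; first by rewrite addn0.
by rewrite IH ltnS addSnnS.
Qed.

Definition both_letter : option unit * option unit := (Some tt, Some tt).
Definition fst_letter : option unit * option unit := (Some tt, None).
Definition snd_letter : option unit * option unit := (None, Some tt).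

Definition unary_conv p q : seq (option unit * option unit) :=
  nseq (minn p q) both_letter ++
  (if p <= q then nseq (q - p) snd_letter else nseq (p - q) fst_letter).

Lemma conv_nseq p q : conv (nseq p tt) (nseq q tt) = unary_conv p q.
Proof.
apply: eq_from_onth => i.
rewrite /conv onth_map onth_iota !size_nseq /unary_conv onth_cat size_nseq !onth_nseq.
by case: (leqP p q) => Hpq; repeat (case: ifP => /=; rewrite ?onth_nseq); (done || lia).
Qed.

Lemma unary_conv_inj p q p' q' : unary_conv p q = unary_conv p' q' -> p = p' /\ q = q'.
Proof.
have count_fst a b : count (fun x => x.1 != None) (unary_conv a b) = a.
  by rewrite /unary_conv count_cat !count_nseq; case: ifP; rewrite count_nseq /=; lia.
have count_snd a b : count (fun x => x.2 != None) (unary_conv a b) = b.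
  by rewrite /unary_conv count_cat !count_nseq; case: ifP; rewrite count_nseq /=; lia.
by move=> E; split; [rewrite -(count_fst p q) E count_fst | rewrite -(count_snd p q) E count_snd].
Qed.

Lemma unary_conv_rcons_both p : rcons (unary_conv p p) both_letter = unary_conv p.+1 p.+1.
Proof. by rewrite /unary_conv !minnn leqnn ltnSn !subnn !cats0 -cats1 -addn1 nseqD. Qed.

Lemma unary_conv_rcons_fst p q :
  q <= p -> rcons (unary_conv p q) fst_letter = unary_conv p.+1 q.
Proof.
move=> le_qp; rewrite /unary_conv -cats1 -catA.
rewrite (minn_idPr le_qp) (minn_idPr (leqW le_qp)).
have -> : p.+1 <= q = false by lia.
case: leqP => [le_pq|lt_qp].
- have -> : p = q by lia.
  by rewrite subnn subSnn.
- by rewrite subSn // -addn1 nseqD catA.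
Qed.

Lemma unary_conv_rcons_snd p q :
  p <= q -> rcons (unary_conv p q) snd_letter = unary_conv p q.+1.
Proof.
move=> le_pq; rewrite /unary_conv -cats1 -catA.
rewrite (minn_idPl le_pq) (minn_idPl (leqW le_pq)) le_pq leqW //=.
by rewrite subSn // -addn1 nseqD catA.
Qed.

(* State reached after reading [unary_conv p q] when [A], [B], [C] are the
   transitions on [both_letter], [fst_letter], [snd_letter]. *)
Definition conv_run (S : Type) (s0 : S) (A B C : S -> S) p q :=
  if p <= q then iter (q - p) C (iter p A s0) else iter (p - q) B (iter q A s0).

Lemma dfa_run_unary_conv (S : Type) (d : S -> option unit * option unit -> S) s0 p q :
  dfa_run d s0 (unary_conv p q) =
  conv_run s0 (d^~ both_letter) (d^~ fst_letter) (d^~ snd_letter) p q.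
Proof.
rewrite /dfa_run /unary_conv /conv_run foldl_cat foldl_nseq.
by case: leqP => _; rewrite foldl_nseq.
Qed.

Definition regular_nat (U : nat -> Prop) : Prop :=
  exists (S : finType) (s0 : S) (f : S -> S) (F : pred S),
    forall n, U n <-> F (iter n f s0).

Definition regular_nat2 (R : nat -> nat -> Prop) : Prop :=
  exists (S : finType) (s0 : S) (A B C : S -> S) (F : pred S),
    forall p q, R p q <-> F (conv_run s0 A B C p q).

Lemma regular_unaryP (L : uword -> Prop) :
  regular L <-> regular_nat (fun n => L (nseq n tt)).
Proof.
split=> [[S [s0 [d [F HL]]]] | [S [s0 [f [F HL]]]]].
- by exists S, s0, (d^~ tt), F => n; rewrite HL /dfa_run foldl_nseq.
- exists S, s0, (fun s _ => f s), F => w.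
  by rewrite [w in L w]uword_nseq HL /dfa_run [w in foldl _ _ w]uword_nseq foldl_nseq.
Qed.

Section ConvAutomaton.
Variables (S : finType) (s0 : S) (A B C : S -> S).

(* The control component is [Some None] while both words are being read,
   [Some (Some true)] once only the first one is left, [Some (Some false)]
   once only the second one is left, and [None] after a letter that cannot
   occur at that point of a convolution of two unary words. *)
Definition conv_phase p q : option (option bool) :=
  if p == q then Some None else Some (Some (q < p)).

Definition conv_step (z : S * option (option bool)) (x : option unit * option unit) :=
  match z.2, x with
  | Some None, (Some _, Some _) => (A z.1, Some None)
  | (Some None | Some (Some true)), (Some _, None) => (B z.1, Some (Some true))
  | (Some None | Some (Some false)), (None, Some _) => (C z.1, Some (Some false))
  | _, _ => (z.1, None)
  end.

Lemma foldl_conv_step p q :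
  foldl conv_step (s0, Some None) (unary_conv p q) = (conv_run s0 A B C p q, conv_phase p q).
Proof.
have iter_both n s : iter n (conv_step^~ both_letter) (s, Some None) = (iter n A s, Some None).
  by elim: n => //= n ->.
have iter_fst n s : iter n (conv_step^~ fst_letter) (s, Some None) =
    (iter n B s, if n == 0 then Some None else Some (Some true)).
  by elim: n => //= n ->; case: (n == 0).
have iter_snd n s : iter n (conv_step^~ snd_letter) (s, Some None) =
    (iter n C s, if n == 0 then Some None else Some (Some false)).
  by elim: n => //= n ->; case: (n == 0).
rewrite /unary_conv /conv_run /conv_phase foldl_cat foldl_nseq iter_both.
case: leqP => Hpq; rewrite foldl_nseq ?iter_fst ?iter_snd; congr pair;
  by do 2 case: eqP; move=> *; (done || lia).
Qed.

Lemma foldl_conv_step_alive w :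
  (foldl conv_step (s0, Some None) w).2 != None -> exists p q, w = unary_conv p q.
Proof.
elim/last_ind: w => [|w x IH]; first by exists 0, 0.
rewrite foldl_rcons => alive.
have [p [q Ew]] : exists p q, w = unary_conv p q.
  by apply: IH; move: alive; case: (foldl _ _ w) => ? [].
move: alive; rewrite Ew foldl_conv_step /conv_phase.
case: x => [[[]|] [[]|]]; case: (eqVneq p q) => [<-|neq_pq];
  try case: ltnP => ineq; rewrite //= => _.
- by exists p.+1, p.+1; apply: unary_conv_rcons_both.
- by exists p.+1, p; apply: unary_conv_rcons_fst.
- by exists p.+1, q; apply: unary_conv_rcons_fst; lia.
- by exists p, p.+1; apply: unary_conv_rcons_snd.
- by exists p, q.+1; apply: unary_conv_rcons_snd.
Qed.

End ConvAutomaton.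

Lemma regular_rel_unaryP (R : uword -> uword -> Prop) :
  regular_rel R <-> regular_nat2 (fun p q => R (nseq p tt) (nseq q tt)).
Proof.
have conv_unary u v : conv u v = unary_conv (size u) (size v).
  by rewrite [u in conv u]uword_nseq [v in conv _ v]uword_nseq conv_nseq.
split=> [[S [s0 [d [F HR]]]] | [S [s0 [A [B [C [F HR]]]]]]].
- exists S, s0, (d^~ both_letter), (d^~ fst_letter), (d^~ snd_letter), F => p q.
  rewrite -dfa_run_unary_conv -HR; split=> [Rpq | [u [v [Ruv]]]].
  + by exists (nseq p tt), (nseq q tt); rewrite conv_nseq.
  + by rewrite conv_unary => /unary_conv_inj [-> ->]; rewrite -!uword_nseq.
- exists (S * option (option bool))%type, (s0, Some None), (conv_step A B C),
    (fun z => (z.2 != None) && F z.1) => w.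
  split=> [[u [v [Ruv ->]]] | /andP [alive Fw]].
  + rewrite conv_unary /dfa_run foldl_conv_step /conv_phase /=.
    apply/andP; split; first by case: (size u == size v).
    by apply/HR; rewrite -!uword_nseq.
  + have [p [q Ew]] := foldl_conv_step_alive alive.
    exists (nseq p tt), (nseq q tt); rewrite conv_nseq HR; split=> //.
    by move: Fw; rewrite Ew /dfa_run foldl_conv_step.
Qed.

Lemma eq_regular_nat (U V : nat -> Prop) :
  (forall n, U n <-> V n) -> regular_nat U -> regular_nat V.
Proof.
by move=> UV [S [s0 [f [F HU]]]]; exists S, s0, f, F => n; rewrite -UV.
Qed.

Lemma eq_regular_nat2 (R R' : nat -> nat -> Prop) :
  (forall p q, R p q <-> R' p q) -> regular_nat2 R -> regular_nat2 R'.
Proof.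
by move=> RR' [S [s0 [A [B [C [F HR]]]]]]; exists S, s0, A, B, C, F => p q; rewrite -RR'.
Qed.

Lemma iter_pair (S1 S2 : Type) (f1 : S1 -> S1) (f2 : S2 -> S2) n z :
  iter n (fun z => (f1 z.1, f2 z.2)) z = (iter n f1 z.1, iter n f2 z.2).
Proof. by elim: n => [|n IH] /=; [case: z | rewrite IH]. Qed.

Lemma conv_run_pair (S1 S2 : Type) (s1 : S1) (s2 : S2) A1 B1 C1 A2 B2 C2 p q :
  conv_run (s1, s2) (fun z => (A1 z.1, A2 z.2)) (fun z => (B1 z.1, B2 z.2))
    (fun z => (C1 z.1, C2 z.2)) p q =
  (conv_run s1 A1 B1 C1 p q, conv_run s2 A2 B2 C2 p q).
Proof. by rewrite /conv_run; case: leqP => _; rewrite !iter_pair. Qed.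

Lemma regular_nat2_and (R R' : nat -> nat -> Prop) :
  regular_nat2 R -> regular_nat2 R' -> regular_nat2 (fun p q => R p q /\ R' p q).
Proof.
move=> [S1 [s1 [A1 [B1 [C1 [F1 H1]]]]]] [S2 [s2 [A2 [B2 [C2 [F2 H2]]]]]].
exists (S1 * S2)%type, (s1, s2), (fun z => (A1 z.1, A2 z.2)), (fun z => (B1 z.1, B2 z.2)),
  (fun z => (C1 z.1, C2 z.2)), (fun z => F1 z.1 && F2 z.2) => p q.
by rewrite conv_run_pair H1 H2; split=> [[-> ->] | /andP].
Qed.

Lemma regular_nat2_or (R R' : nat -> nat -> Prop) :
  regular_nat2 R -> regular_nat2 R' -> regular_nat2 (fun p q => R p q \/ R' p q).
Proof.
move=> [S1 [s1 [A1 [B1 [C1 [F1 H1]]]]]] [S2 [s2 [A2 [B2 [C2 [F2 H2]]]]]].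
exists (S1 * S2)%type, (s1, s2), (fun z => (A1 z.1, A2 z.2)), (fun z => (B1 z.1, B2 z.2)),
  (fun z => (C1 z.1, C2 z.2)), (fun z => F1 z.1 || F2 z.2) => p q.
by rewrite conv_run_pair H1 H2; split=> [[->|->] | /orP]; rewrite ?orbT.
Qed.

Lemma regular_nat2_const (P : Prop) : regular_nat2 (fun _ _ => P).
Proof.
case: (classic P) => HP.
- by exists unit, tt, id, id, id, predT.
- by exists unit, tt, id, id, id, pred0.
Qed.

Lemma regular_nat2_swap (R : nat -> nat -> Prop) :
  regular_nat2 R -> regular_nat2 (fun p q => R q p).
Proof.
move=> [S [s0 [A [B [C [F HR]]]]]]; exists S, s0, A, C, B, F => p q.
by rewrite HR /conv_run; case: ltngtP => // ->; rewrite subnn.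
Qed.

Lemma regular_nat2_fst (U : nat -> Prop) : regular_nat U -> regular_nat2 (fun p _ => U p).
Proof.
move=> [S [s0 [f [F HU]]]]; exists S, s0, f, f, id, F => p q.
rewrite HU /conv_run; case: leqP => le_pq; first by elim: (q - p) => //= n ->.
by rewrite -iterD subnK // ltnW.
Qed.

Lemma regular_nat2_snd (U : nat -> Prop) : regular_nat U -> regular_nat2 (fun _ q => U q).
Proof. by move/regular_nat2_fst/regular_nat2_swap. Qed.

Lemma regular_nat_diag (R : nat -> nat -> Prop) :
  regular_nat2 R -> regular_nat (fun n => R n n).
Proof.
move=> [S [s0 [A [B [C [F HR]]]]]]; exists S, s0, A, F => n.
by rewrite HR /conv_run leqnn subnn.
Qed.

Lemma regular_nat_section (R : nat -> nat -> Prop) c :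
  regular_nat2 R -> regular_nat (fun p => R p c).
Proof.
move=> [S [s0 [A [B [C [F HR]]]]]].
(* The counter stops at [c]; the acceptance test replays the letters of the
   second word that remain after [p] letters when [p < c]. *)
pose step (z : S * 'I_c.+1) : S * 'I_c.+1 :=
  if z.2 < c then (A z.1, inord z.2.+1) else (B z.1, z.2).
have iter_step p : iter p step (s0, ord0) =
    (if p <= c then iter p A s0 else iter (p - c) B (iter c A s0), inord (minn p c)).
  elim: p => [|p IH]; first by congr pair; apply: val_inj; rewrite /= min0n inordK.
  rewrite iterS IH /step /= inordK ?ltnS ?geq_minr //.
  case: (ltngtP p c) => [lt_pc|lt_cp|->].
  - by rewrite lt_pc (minn_idPl lt_pc).
  - by rewrite ltnn (subSn (ltnW lt_cp)) (minn_idPr (leqW (ltnW lt_cp))).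
  - by rewrite ltnn subSnn (minn_idPr (leqnSn c)).
exists (S * 'I_c.+1)%type, (s0, ord0), step,
  (fun z : S * 'I_c.+1 => F (iter (c - z.2) C z.1)) => p.
rewrite HR iter_step /= inordK ?ltnS ?geq_minr // /conv_run.
by case: leqP => [le_pc|lt_cp]; rewrite ?subnn.
Qed.

Lemma regular_nat_odd (b : bool) : regular_nat (fun n => odd n = b).
Proof.
exists bool, false, negb, (pred1 b) => n.
have -> : iter n negb false = odd n by elim: n => //= n ->.
by split=> /eqP.
Qed.

Lemma regular_nat2_half (R : nat -> nat -> Prop) :
  regular_nat2 R -> regular_nat2 (fun p q => R p./2 q./2).
Proof.
move=> [S [s0 [A [B [C [F HR]]]]]].
(* The two bits are the parities of the lengths read so far; the automaton
   for [R] advances on every second letter of each word. *)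
pose A' (z : S * bool * bool) := (if z.1.2 then A z.1.1 else z.1.1, ~~ z.1.2, ~~ z.2).
pose B' (z : S * bool * bool) := (if z.1.2 then B z.1.1 else z.1.1, ~~ z.1.2, z.2).
pose C' (z : S * bool * bool) := (if z.2 then C z.1.1 else z.1.1, z.1.2, ~~ z.2).
have iter_A' k : iter k A' (s0, false, false) = (iter k./2 A s0, odd k, odd k).
  by elim: k => //= k ->; rewrite /A' /= uphalf_half; case: (odd k).
have iter_B' k j s b : iter j B' (s, odd k, b) = (iter ((k + j)./2 - k./2) B s, odd (k + j), b).
  elim: j s => [|j IH] s; first by rewrite addn0 subnn.
  rewrite iterS IH /B' addnS /= uphalf_half.
  by case: (odd (k + j)) => //=; rewrite subSn // half_leq // leq_addr.
have iter_C' k j s b : iter j C' (s, b, odd k) = (iter ((k + j)./2 - k./2) C s, b, odd (k + j)).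
  elim: j s => [|j IH] s; first by rewrite addn0 subnn.
  rewrite iterS IH /C' addnS /= uphalf_half.
  by case: (odd (k + j)) => //=; rewrite subSn // half_leq // leq_addr.
exists (S * bool * bool)%type, (s0, false, false), A', B', C', (fun z => F z.1.1) => p q.
rewrite HR /conv_run; case: (leqP p q) => [le_pq|lt_qp].
- by rewrite iter_A' iter_C' subnKC // half_leq.
- rewrite iter_A' iter_B' subnKC ?(ltnW lt_qp) //=.
  case: leqP => // le_half; suff -> : p./2 = q./2 by rewrite subnn.
  by apply/eqP; rewrite eqn_leq le_half half_leq // (ltnW lt_qp).
Qed.

Lemma regular_nat2_interleave (R : bool -> bool -> nat -> nat -> Prop) :
  (forall a b, regular_nat2 (R a b)) ->
  regular_nat2 (fun p q => R (odd p) (odd q) p./2 q./2).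
Proof.
move=> regR.
have part a b : regular_nat2 (fun p q => (odd p = a /\ odd q = b) /\ R a b p./2 q./2).
  apply: regular_nat2_and (regular_nat2_half (regR a b)).
  exact: regular_nat2_and (regular_nat2_fst (regular_nat_odd a))
                          (regular_nat2_snd (regular_nat_odd b)).
apply: eq_regular_nat2 (regular_nat2_or (regular_nat2_or (part true true) (part true false))
                                        (regular_nat2_or (part false true) (part false false))).
by move=> p q; case: (odd p); case: (odd q); intuition discriminate.
Qed.

Definition presented_pred (X : Type) (D : nat -> Prop) (f : nat -> X) (P : X -> Prop) :=
  regular_nat (fun n => D n /\ P (f n)).

Definition presented_rel (X Y : Type) (D : nat -> Prop) (f : nat -> X)
    (E : nat -> Prop) (h : nat -> Y) (P : X -> Y -> Prop) :=
  regular_nat2 (fun m n => D m /\ E n /\ P (f m) (h n)).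

Lemma presented_pred_andr (X : Type) (D : nat -> Prop) (f : nat -> X)
    (P : X -> Prop) (Q : Prop) :
  presented_pred D f P -> presented_pred D f (fun x => P x /\ Q).
Proof.
move=> regP; apply: eq_regular_nat
  (regular_nat_diag (regular_nat2_and (regular_nat2_fst regP) (regular_nat2_const Q))) => n.
tauto.
Qed.

Section Presented.
Variables (X Y : Type) (D : nat -> Prop) (f : nat -> X) (E : nat -> Prop) (h : nat -> Y).

Lemma presented_rel_comp (X' Y' : Type) (k : X -> X') (l : Y -> Y')
    (P : X -> Y -> Prop) (P' : X' -> Y' -> Prop) :
  presented_rel D f E h P -> (forall x y, P x y <-> P' (k x) (l y)) ->
  presented_rel D (k \o f) E (l \o h) P'.
Proof. by move=> regP PP'; apply: eq_regular_nat2 regP => m n; rewrite /= PP'. Qed.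

Lemma presented_rel_or (P P' : X -> Y -> Prop) :
  presented_rel D f E h P -> presented_rel D f E h P' ->
  presented_rel D f E h (fun x y => P x y \/ P' x y).
Proof.
move=> regP regP'; apply: eq_regular_nat2 (regular_nat2_or regP regP') => m n; tauto.
Qed.

Lemma presented_rel_prod (P : X -> Prop) (Q : Y -> Prop) :
  presented_pred D f P -> presented_pred E h Q ->
  presented_rel D f E h (fun x y => P x /\ Q y).
Proof.
move=> regP regQ.
apply: eq_regular_nat2 (regular_nat2_and (regular_nat2_fst regP) (regular_nat2_snd regQ)).
move=> m n; tauto.
Qed.

Lemma presented_rel_section_l (P : X -> Y -> Prop) y0 :
  presented_rel D f E h P -> (exists2 n, E n & h n = y0) ->
  presented_pred D f (fun x => P x y0).
Proof.
move=> regP [n0 En0 <-]; apply: eq_regular_nat (regular_nat_section n0 regP) => m; tauto.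
Qed.

Lemma presented_rel_section_r (P : X -> Y -> Prop) x0 :
  presented_rel D f E h P -> (exists2 m, D m & f m = x0) ->
  presented_pred E h (fun y => P x0 y).
Proof.
move=> /regular_nat2_swap regP [m0 Dm0 <-].
by apply: eq_regular_nat (regular_nat_section m0 regP) => n; tauto.
Qed.

End Presented.

Lemma presented_rel_interleave (X : Type) (D : bool -> nat -> Prop) (f : bool -> nat -> X)
    (P : X -> X -> Prop) :
  (forall a b, presented_rel (D a) (f a) (D b) (f b) P) ->
  presented_rel (fun n => D (odd n) n./2) (fun n => f (odd n) n./2)
                (fun n => D (odd n) n./2) (fun n => f (odd n) n./2) P.
Proof. exact: regular_nat2_interleave. Qed.

Record nat_presentation (X : Type) (rel : X -> X -> Prop) (D : nat -> Prop) (f : nat -> X) :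
    Prop := NatPresentation {
  numbering_surj : forall x, exists2 n, D n & f n = x;
  presented_eq : presented_rel D f D f eq;
  presented_edge : presented_rel D f D f rel }.

Lemma nat_presentation_unary_FA (X : Type) (rel : X -> X -> Prop) D (f : nat -> X) :
  nat_presentation rel D f -> unary_FA_presentable rel.
Proof.
move=> [surj regEq regRel].
have lift (P : X -> X -> Prop) : presented_rel D f D f P ->
    regular_rel (fun u v : uword =>
                   exists (Du : D (size u)) (Dv : D (size v)), P (f (size u)) (f (size v))).
  move=> regP; apply/regular_rel_unaryP; apply: eq_regular_nat2 regP => p q.
  by rewrite !size_nseq; split=> [[Dp [Dq Ppq]] | [Dp [Dq Ppq]]]; [exists Dp, Dq |].
exists (fun w => D (size w)), (fun w => f (size (sval w))).
split; [|split; [|split; [exact: lift regEq | exact: lift regRel]]].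
- apply/regular_unaryP; apply: eq_regular_nat (regular_nat_diag regEq) => n.
  by rewrite size_nseq; tauto.
- move=> x; have [n Dn <-] := surj x.
  have Dn' : D (size (nseq n tt)) by rewrite size_nseq.
  by exists (exist (fun w : uword => D (size w)) _ Dn'); rewrite /= size_nseq.
Qed.

Lemma unary_FA_nat_presentation (X : Type) (rel : X -> X -> Prop) (x0 : X) :
  unary_FA_presentable rel -> exists D (f : nat -> X), nat_presentation rel D f.
Proof.
move=> [L [phi [_ [surj [regEq regRel]]]]].
have phi_eq u v (Lu : L u) (Lv : L v) : u = v -> phi (exist _ u Lu) = phi (exist _ v Lv).
  by move=> eq_uv; subst v; rewrite (proof_irrelevance _ Lu Lv).
(* [phi] on the word [a^n], extended by [x0] outside [L] *)
pose f n := match excluded_middle_informative (L (nseq n tt)) with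
            | left Ln => phi (exist _ _ Ln) | right _ => x0 end.
have fE u (Lu : L u) : f (size u) = phi (exist _ u Lu).
  rewrite /f; case: excluded_middle_informative => [Ln|]; last by rewrite -uword_nseq.
  exact: phi_eq (esym (uword_nseq u)).
have lower (P : X -> X -> Prop) :
    regular_rel (fun u v => exists (Lu : L u) (Lv : L v),
                              P (phi (exist _ u Lu)) (phi (exist _ v Lv))) ->
    presented_rel (fun n => L (nseq n tt)) f (fun n => L (nseq n tt)) f P.
  move=> /regular_rel_unaryP; apply: eq_regular_nat2 => p q.
  split=> [[Lp [Lq Ppq]] | [Lp [Lq Ppq]]].
  - by rewrite -(fE _ Lp) -(fE _ Lq) !size_nseq in Ppq.
  - by exists Lp, Lq; rewrite -(fE _ Lp) -(fE _ Lq) !size_nseq.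
exists (fun n => L (nseq n tt)), f; split; [|exact: lower regEq|exact: lower regRel].
move=> x; have [[u Lu] <-] := surj x.
exists (size u); first by rewrite -uword_nseq.
exact: fE.
Qed.

Section Attach.
Variables (G T : Type) (gamma : G -> G -> Prop) (eta : T -> T -> Prop) (g : G) (t : T).

Definition attach_inr (y : T) : attach_vertex G t :=
  match excluded_middle_informative (y = t) with
  | left _ => inl g
  | right ne => inr (exist _ y ne)
  end.

Lemma attach_inr_id : attach_inr t = inl g.
Proof. by rewrite /attach_inr; case: excluded_middle_informative. Qed.

Lemma attach_inr_neq y (ne : y <> t) : attach_inr y = inr (exist _ y ne).
Proof.
rewrite /attach_inr; case: excluded_middle_informative => // ne'.
by rewrite (proof_irrelevance _ ne ne').
Qed.

Lemma attach_inrP y : y = t \/ exists ne : y <> t, attach_inr y = inr (exist _ y ne).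
Proof.
by case: (classic (y = t)) => [|ne]; [left | right; exists ne; apply: attach_inr_neq].
Qed.

Lemma attach_inr_inj : injective attach_inr.
Proof.
move=> x y; case: (attach_inrP x) => [->|[nx ->]]; case: (attach_inrP y) => [->|[ny ->]] //.
- by rewrite attach_inr_id.
- by rewrite attach_inr_id.
- by case.
Qed.

Lemma inl_eq_attach_inr x y : inl x = attach_inr y <-> x = g /\ y = t.
Proof.
case: (attach_inrP y) => [->|[ny ->]]; rewrite ?attach_inr_id; intuition (try congruence).
Qed.

Lemma attach_rel_inr_inr x y :
  attach_rel gamma eta g (attach_inr x) (attach_inr y) <->
  eta x y \/ (x = t /\ y = t /\ gamma g g).
Proof.
case: (attach_inrP x) => [->|[nx ->]]; case: (attach_inrP y) => [->|[ny ->]];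
  rewrite ?attach_inr_id /=; intuition.
Qed.

Lemma attach_rel_inl_inr x y :
  attach_rel gamma eta g (inl x) (attach_inr y) <->
  (gamma x g /\ y = t) \/ (x = g /\ eta t y).
Proof.
case: (attach_inrP y) => [->|[ny ->]]; rewrite ?attach_inr_id /=; intuition (try congruence).
Qed.

Lemma attach_rel_inr_inl x y :
  attach_rel gamma eta g (attach_inr x) (inl y) <->
  (x = t /\ gamma g y) \/ (eta x t /\ y = g).
Proof.
case: (attach_inrP x) => [->|[nx ->]]; rewrite ?attach_inr_id /=; intuition (try congruence).
Qed.

End Attach.




Section AttachPresentation.
Variables (G T : Type) (gamma : G -> G -> Prop) (eta : T -> T -> Prop) (g : G) (t : T).
Variables (DG : nat -> Prop) (fG : nat -> G) (DT : nat -> Prop) (fT : nat -> T).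
Hypotheses (presG : nat_presentation gamma DG fG) (presT : nat_presentation eta DT fT).

Definition attach_dom (b : bool) : nat -> Prop := if b then DT else DG.

Definition attach_num (b : bool) : nat -> attach_vertex G t :=
  if b then attach_inr g t \o fT else inl \o fG.

Let point_g := presented_rel_section_l (presented_eq presG) (numbering_surj presG g).
Let point_t := presented_rel_section_l (presented_eq presT) (numbering_surj presT t).
Let edge_to_g := presented_rel_section_l (presented_edge presG) (numbering_surj presG g).
Let edge_from_g := presented_rel_section_r (presented_edge presG) (numbering_surj presG g).
Let edge_to_t := presented_rel_section_l (presented_edge presT) (numbering_surj presT t).
Let edge_from_t := presented_rel_section_r (presented_edge presT) (numbering_surj presT t).

Lemma attach_presented_eq a b :
  presented_rel (attach_dom a) (attach_num a) (attach_dom b) (attach_num b) eq.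
Proof.
case: a; case: b.
- apply: presented_rel_comp (presented_eq presT) _ => x y.
  by split=> [-> | eq_xy]; last exact: attach_inr_inj eq_xy.
- apply: presented_rel_comp (presented_rel_prod point_t point_g) _ => x y.
  split=> [[-> ->] | eq_xy]; first by rewrite attach_inr_id.
  by case/esym/inl_eq_attach_inr: eq_xy.
- apply: presented_rel_comp (presented_rel_prod point_g point_t) _ => x y.
  by rewrite inl_eq_attach_inr.
- apply: presented_rel_comp (presented_eq presG) _ => x y.
  by split=> [-> | []].
Qed.

Lemma attach_presented_edge a b :
  presented_rel (attach_dom a) (attach_num a) (attach_dom b) (attach_num b)
    (@attach_rel G T gamma eta g t).
Proof.
case: a; case: b.
- apply: presented_rel_comp (presented_rel_or (presented_edge presT)
    (presented_rel_prod (presented_pred_andr (gamma g g) point_t) point_t)) _ => x y.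
  by rewrite attach_rel_inr_inr; tauto.
- apply: presented_rel_comp (presented_rel_or (presented_rel_prod point_t edge_from_g)
    (presented_rel_prod edge_to_t point_g)) _ => x y.
  by rewrite attach_rel_inr_inl.
- apply: presented_rel_comp (presented_rel_or (presented_rel_prod edge_to_g point_t)
    (presented_rel_prod point_g edge_from_t)) _ => x y.
  by rewrite attach_rel_inl_inr.
- apply: presented_rel_comp (presented_rel_or (presented_edge presG)
    (presented_rel_prod (presented_pred_andr (eta t t) point_g) point_g)) _ => x y /=.
  tauto.
Qed.

Lemma attach_numbering_surj (v : attach_vertex G t) :
  exists2 n, attach_dom (odd n) n./2 & attach_num (odd n) n./2 = v.
Proof.
case: v => [x | y].
- have [n DGn <-] := numbering_surj presG x.
  by exists n.*2; rewrite odd_double doubleK.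
- have [n DTn fTn] := numbering_surj presT (sval y).
  exists n.*2.+1; rewrite /= odd_double uphalf_double //=.
  by case: y fTn => y ne /= fTn; subst y; apply: attach_inr_neq.
Qed.

Lemma attach_nat_presentation :
  nat_presentation (@attach_rel G T gamma eta g t)
    (fun n => attach_dom (odd n) n./2) (fun n => attach_num (odd n) n./2).
Proof.
split; first exact: attach_numbering_surj.
- exact/presented_rel_interleave/attach_presented_eq.
- exact/presented_rel_interleave/attach_presented_edge.
Qed.

End AttachPresentation.

Theorem lemma6p4 (G : Type) (gamma : G -> G -> Prop)
    (T : Type) (eta : T -> T -> Prop) (g : G) (t : T) :
  unary_FA_presentable gamma ->
  unary_FA_presentable eta ->
  unary_FA_presentable (@attach_rel G T gamma eta g t).
Proof.
move=> /(unary_FA_nat_presentation g) [DG [fG presG]].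
move=> /(unary_FA_nat_presentation t) [DT [fT presT]].
exact: nat_presentation_unary_FA (attach_nat_presentation g t presG presT).
Qed.
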